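(* Let $n\ge 1$, $d\ge 0$, and let $p\in\mathcal H(n,d)$ be a generalized Whitney mapping. Then $N(p)\ge d(n-1)+1$.
   Context: Write $s(x)=\sum_{j=1}^n x_j$. $\mathcal J(n)$ is the set of real polynomials $p\in\mathbb R[x_1,\dots,x_n]$ with $p=1$ on the hyperplane $\{s=1\}$; $\mathcal P(n)$ is the set of real polynomials with all coefficients nonnegative; $\mathcal H(n)=\mathcal J(n)\cap\mathcal P(n)$, and $\mathcal H(n,d)$ is the set of elements of $\mathcal H(n)$ of total degree exactly $d$. $N(p)$ is the number of distinct monomials occurring (with nonzero coefficient) in $p$. For polynomials $g,u$ put $X_u(g)=g-u+s u$. An element $p\in\mathcal H(n,d)$ is a generalized Whitney mapping if there exist $g_0,\dots,g_d\in\mathcal H(n)$ with $g_0=1$, $g_d=p$, $\deg g_j=j$ for each $j$, and for each $j>0$, $g_j=X_{u_j}(g_{j-1})$ for some polynomial $u_j$ such that both $u_j$ and $g_{j-1}-u_j$ have nonnegative coefficients. *)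

From HB Require Import structures.
From mathcomp Require Import all_boot all_order all_algebra.
From mathcomp Require Import reals.
From mathcomp Require Import mpoly.
Set Implicit Arguments. Unset Strict Implicit. Unset Printing Implicit Defensive.
Import Order.TTheory GRing.Theory Num.Theory.
Local Open Scope ring_scope.

Definition spoly (R : realType) (n : nat) : {mpoly R[n]} := \sum_(i < n) 'X_i.

Definition inJ (R : realType) (n : nat) (p : {mpoly R[n]}) : Prop :=
  forall x : 'I_n -> R, \sum_(i < n) x i = 1 -> p.@[x] = 1.

Definition inP (R : realType) (n : nat) (p : {mpoly R[n]}) : Prop :=
  forall m : 'X_{1..n}, 0 <= p@_m.

Definition inH (R : realType) (n : nat) (p : {mpoly R[n]}) : Prop :=
  inJ p /\ inP p.

(* total degree exactly d (msize p = 1 + total degree, msize 0 = 0) *)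
Definition has_deg (R : realType) (n : nat) (p : {mpoly R[n]}) (d : nat) : Prop :=
  msize p = d.+1.

Definition inHd (R : realType) (n : nat) (p : {mpoly R[n]}) (d : nat) : Prop :=
  inH p /\ has_deg p d.

Definition Nmon (R : realType) (n : nat) (p : {mpoly R[n]}) : nat :=
  size (msupp p).

Definition Xop (R : realType) (n : nat) (u g : {mpoly R[n]}) : {mpoly R[n]} :=
  g - u + spoly R n * u.

Definition gen_whitney (R : realType) (n : nat) (p : {mpoly R[n]}) (d : nat) : Prop :=
  inHd p d /\
  exists g : nat -> {mpoly R[n]},
    [/\ g 0%N = 1, g d = p,
        (forall j, (j <= d)%N -> inH (g j) /\ has_deg (g j) j) &
        (forall j, (0 < j <= d)%N ->
           exists u : {mpoly R[n]},
             [/\ g j = Xop u (g j.-1), inP u & inP (g j.-1 - u)])].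

From HB Require Import structures.
From mathcomp Require Import all_boot all_order all_algebra.
From mathcomp Require Import reals.
From mathcomp Require Import mpoly.
From mathcomp Require Import zify.
Set Implicit Arguments. Unset Strict Implicit. Unset Printing Implicit Defensive.
Import Order.TTheory GRing.Theory Num.Theory.
Local Open Scope ring_scope.

(* Nonnegativity of coefficients makes supports only grow along the chain:
   passing from g_j to X_u(g_j) = (g_j - u) + s u, a monomial m of the support
   either stays or reappears as m + e_i, for any prescribed i, and every k in
   the support of u yields all the k + e_i.  Tracing the leading monomial of p
   back through the chain gives monomials c_0, ..., c_d with
   c_(l+1) = c_l + e_(i_l) and every c_l + e_i in the support of g_(l+1);
   pushing c_l + e_i forward along e_i gives a monomial c_l + (b+1) e_i in the
   support of p.  For i <> i_l these d(n-1) monomials and the leading one are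
   pairwise distinct, being separated by their i_l-th exponents. *)

Lemma neq0_le_trans (R : numDomainType) (a b : R) :
  0 <= a -> a <= b -> a != 0 -> b != 0.
Proof.
move=> a_ge0 ab a_neq0; apply: lt0r_neq0; apply: lt_le_trans ab.
by rewrite lt_def a_neq0.
Qed.

Section NonnegativeCoefficients.
Variables (R : realType) (n : nat).
Implicit Types (p q u G : {mpoly R[n]}).

Lemma inP_mul p q : inP p -> inP q -> inP (p * q).
Proof. by move=> hp hq m; rewrite mcoeffM; apply: sumr_ge0 => k _; apply: mulr_ge0. Qed.

Lemma inP_X (i : 'I_n) : inP ('X_i : {mpoly R[n]}).
Proof. by move=> m; rewrite mcoeffX ler0n. Qed.

Lemma inP_spoly : inP (spoly R n).
Proof. by move=> m; rewrite /spoly raddf_sum /=; apply: sumr_ge0 => i _; apply: inP_X. Qed.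

Lemma mcoeff_spolyM_shift u (i : 'I_n) k :
  inP u -> u@_k <= (spoly R n * u)@_(k + U_(i)).
Proof.
move=> hu; rewrite /spoly mulr_suml raddf_sum (bigD1 i) //= mulrC addmC mcoeffMX lerDl.
by apply: sumr_ge0 => j _; apply/inP_mul/hu/inP_X.
Qed.

Section Step.
Variables (G u : {mpoly R[n]}).
Hypotheses (u_ge0 : inP u) (Gu_ge0 : inP (G - u)).

Lemma mcoeff_Xop m : (Xop u G)@_m = (G - u)@_m + (spoly R n * u)@_m.
Proof. by rewrite /Xop mcoeffD. Qed.

Lemma mcoeff_le_sub k : u@_k <= G@_k.
Proof. by have := Gu_ge0 k; rewrite mcoeffB subr_ge0. Qed.

Lemma mcoeff_neq0_sub k : u@_k != 0 -> G@_k != 0.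
Proof. exact/neq0_le_trans/mcoeff_le_sub. Qed.

Lemma mcoeff_Xop_shift_neq0 k (i : 'I_n) : u@_k != 0 -> (Xop u G)@_(k + U_(i)) != 0.
Proof.
apply: neq0_le_trans => //; rewrite mcoeff_Xop.
by apply: le_trans (mcoeff_spolyM_shift i k u_ge0) _; rewrite lerDr.
Qed.

Lemma mcoeff_Xop_neq0 m (i : 'I_n) : G@_m != 0 ->
  (Xop u G)@_m != 0 \/ (Xop u G)@_(m + U_(i)) != 0.
Proof.
move=> Gm; have [um|Gum] := eqVneq ((G - u)@_m) 0.
  right; apply: mcoeff_Xop_shift_neq0.
  by move/eqP: um Gm; rewrite mcoeffB subr_eq0 => /eqP <-.
left; apply: neq0_le_trans Gum; rewrite // mcoeff_Xop lerDl.
exact/inP_mul/u_ge0/inP_spoly.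
Qed.

Lemma mcoeff_Xop_high m : (msize G <= mdeg m)%N -> (Xop u G)@_m != 0 ->
  exists (i : 'I_n) k, m = (k + U_(i))%MM /\ u@_k != 0.
Proof.
move=> Gm; have G0 : G@_m = 0 by apply/eqP; rewrite mcoeff_eq0; apply: msize_mdeg_ge.
have u0 : u@_m = 0 by apply/eqP; rewrite eq_le u_ge0 andbT -G0 mcoeff_le_sub.
rewrite mcoeff_Xop mcoeffB G0 u0 subrr add0r /spoly mulr_suml raddf_sum.
have [i|noX] := pickP (fun i : 'I_n => ('X_i * u)@_m != 0); last first.
  by rewrite big1 ?eqxx // => i _; apply/eqP/negbFE/noX.
rewrite mulrC -mcoeff_msupp (perm_mem (msuppMX _ _)) => /mapP[k uk ->] _.
by exists i, k; rewrite addmC -mcoeff_msupp.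
Qed.

End Step.
End NonnegativeCoefficients.

Section WhitneyChain.
Variables (R : realType) (n : nat) (g : nat -> {mpoly R[n]}) (d : nat).
Hypothesis g_step : forall j, (0 < j <= d)%N ->
  exists u, [/\ g j = Xop u (g j.-1), inP u & inP (g j.-1 - u)].
Hypothesis g_size : forall j, (j <= d)%N -> msize (g j) = j.+1.

Lemma whitney_shift_supp t m (i : 'I_n) : (t <= d)%N -> (g t)@_m != 0 ->
  exists b, (g d)@_(m + U_(i) *+ b) != 0.
Proof.
move=> /subnKC; move: (d - t)%N => k; elim: k t m => [|k IHk] t m tk gm.
  by exists 0%N; rewrite mulm0n addm0 -tk addn0.
have tS : (0 < t.+1 <= d)%N by lia.
have [u [gu u_ge0 gu_ge0]] := g_step tS; rewrite succnK in gu u_ge0 gu_ge0.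
have tk' : (t.+1 + k)%N = d by rewrite addSnnS.
case: (mcoeff_Xop_neq0 u_ge0 gu_ge0 i gm); rewrite -gu => gm'.
  exact: IHk tk' gm'.
by have [b gb] := IHk _ _ tk' gm'; exists b.+1; rewrite mulmS addmA.
Qed.

Lemma whitney_chain j m : (j <= d)%N -> mdeg m = j -> (g j)@_m != 0 ->
  exists c : nat -> 'X_{1..n}, [/\ c j = m,
    forall l, (l < j)%N -> exists i, c l.+1 = (c l + U_(i))%MM &
    forall l (i : 'I_n), (l < j)%N -> (g l.+1)@_(c l + U_(i)) != 0].
Proof.
elim: j m => [|j IHj] m jd mj gm; first by exists (fun=> m).
have [u [gu u_ge0 gu_ge0]] := g_step (jd : 0 < j.+1 <= d)%N.
rewrite succnK in gu gu_ge0; rewrite gu in gm.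
have Gm : (msize (g j) <= mdeg m)%N by rewrite g_size ?mj // ltnW.
have [i [k [mk uk]]] := mcoeff_Xop_high u_ge0 gu_ge0 Gm gm.
have kj : mdeg k = j by move: mj; rewrite mk mdegD mdeg1 addn1 => -[].
have [c [ck c_step c_supp]] := IHj k (ltnW jd) kj (mcoeff_neq0_sub u_ge0 gu_ge0 uk).
pose c' l := if l == j.+1 then m else c l.
have c'E l : (l <= j)%N -> c' l = c l by move=> lj; rewrite /c' ltn_eqF // ltnS.
exists c'; split; first by rewrite /c' eqxx.
- move=> l; rewrite ltnS leq_eqVlt => /orP[/eqP->|lj].
    by exists i; rewrite (c'E j) // ck /c' eqxx.
  by rewrite (c'E l.+1 lj) (c'E l (ltnW lj)); apply: c_step.
- move=> l i'; rewrite ltnS leq_eqVlt => /orP[/eqP->|lj].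
    by rewrite (c'E j) // ck gu; apply: mcoeff_Xop_shift_neq0.
  by rewrite (c'E l (ltnW lj)); apply: c_supp.
Qed.

End WhitneyChain.

Section Branches.
Variables (n d : nat) (c : nat -> 'X_{1..n}).
Hypothesis c_step : forall l, (l < d)%N -> exists i, c l.+1 = (c l + U_(i))%MM.

Lemma chain_lem l k : (l <= k <= d)%N -> (c l <= c k)%MM.
Proof.
elim: k => [|k IHk] /andP[lk kd].
  by move: lk; rewrite leqn0 => /eqP->; apply: lepm_refl.
move: lk; rewrite leq_eqVlt ltnS => /orP[/eqP->|lk]; first exact: lepm_refl.
have [i ->] := c_step kd.
by apply: lepm_trans (lem_addr _ _); rewrite IHk // lk ltnW.
Qed.

Lemma shift_neq_of_lem (k z : 'X_{1..n}) (i x : 'I_n) t :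
  i != x -> (k + U_(x) <= z)%MM -> (k + U_(i) *+ t)%MM != z.
Proof.
move=> ix /mnm_lepP/(_ x); apply: contraTneq => <-.
by rewrite !mnmDE mulmnE !mnm1E eqxx (negbTE ix) mul0n addn0 addn1 ltnn.
Qed.

Lemma mulmSU_inj (i j : 'I_n) a b : (U_(i) *+ a.+1 = U_(j) *+ b.+1)%MM -> i = j.
Proof.
move=> /(congr1 (fun m : 'X_{1..n} => m i)); rewrite !mulmnE !mnm1E eqxx.
by case: eqP.
Qed.

Lemma branches_size (S : seq 'X_{1..n}) :
  c d \in S -> (forall l i, (l < d)%N -> exists b, (c l + U_(i) *+ b.+1)%MM \in S) ->
  (d * (n - 1) + 1 <= size S)%N.
Proof.
move=> cdS branchS.
have exP (l : 'I_d) (i : 'I_n) : exists b, (c l + U_(i) *+ b.+1)%MM \in S.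
  exact: branchS.
pose f (li : 'I_d * 'I_n) := (c li.1 + U_(li.2) *+ (ex_minn (exP li.1 li.2)).+1)%MM.
have fS li : f li \in S by rewrite /f; case: ex_minnP.
pose A := [set li : 'I_d * 'I_n | (c li.1 + U_(li.2))%MM != c li.1.+1].
have cardA : #|A| = (d * (n - 1))%N.
  have -> : #|A| = (\sum_(l < d) \sum_(i < n | (c l + U_(i))%MM != c l.+1) 1)%N.
    by rewrite pair_big_dep -sum1_card; apply: eq_bigl => -[l i]; rewrite inE.
  rewrite (eq_bigr (fun=> (n - 1)%N)) ?sum_nat_const ?card_ord // => l _.
  have [x cx] := c_step (ltn_ord l).
  rewrite sum1_card subn1 -[n in n.-1]card_ord -(cardC1 x); apply: eq_card => i.
  by rewrite !inE cx unfold_in eqm_add2l eq_mnm1.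
(* f (l, i) agrees with c l at the exponent of c (l + 1) - c l, where every
   later c k is strictly larger. *)
have f_sep (l : 'I_d) (i : 'I_n) k z :
    (l, i) \in A -> (l < k <= d)%N -> (c k <= z)%MM -> f (l, i) != z.
  rewrite inE /= => hi lkd kz; have [x cx] := c_step (ltn_ord l).
  have lz : (c l + U_(x) <= z)%MM by rewrite -cx (lepm_trans (chain_lem lkd)).
  by rewrite /f /=; apply: shift_neq_of_lem lz; apply: contraNneq hi => ->; rewrite cx.
have f_inj : {in A &, injective f}.
  move=> [l i] [k j] hA kA fE.
  case: (ltngtP l k) => [lk|kl|/val_inj lk].
  - have lkd : (l < k <= d)%N by rewrite lk ltnW.
    by move: (f_sep l i k (f (k, j)) hA lkd (lem_addr _ _)); rewrite fE eqxx.
  - have kld : (k < l <= d)%N by rewrite kl ltnW.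
    by move: (f_sep k j l (f (l, i)) kA kld (lem_addr _ _)); rewrite fE eqxx.
  - by move: fE; rewrite /f /= lk => /addmI/mulmSU_inj ->.
have fS_uniq : uniq (c d :: [seq f li | li <- enum A]).
  rewrite /= map_inj_in_uniq ?enum_uniq ?andbT; last first.
    by move=> ? ? /[!mem_enum]; apply: f_inj.
  apply/mapP => -[[l i]]; rewrite mem_enum => hA /eqP; apply/negP; rewrite eq_sym.
  by apply: (f_sep l i d); rewrite ?ltn_ord ?leqnn ?lepm_refl.
have fS_sub : {subset c d :: [seq f li | li <- enum A] <= S}.
  by move=> z /[!inE] /orP[/eqP -> //|/mapP[li _ ->]].
by have := uniq_leq_size fS_uniq fS_sub; rewrite /= size_map -cardE cardA addn1.
Qed.
End Branches.

Theorem lemma2 (R : realType) (n d : nat) (p : {mpoly R[n]}) :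
  (1 <= n)%N -> inHd p d -> gen_whitney p d ->
  (d * (n - 1) + 1 <= Nmon p)%N.
Proof.
(* The bound holds for n = 0 as well. *)
move=> _ [_ p_size] [_ [g [_ gd g_deg g_step]]].
have g_size j : (j <= d)%N -> msize (g j) = j.+1 by move=> /g_deg[].
have p_neq0 : p != 0 by apply/eqP => p0; move: p_size; rewrite /has_deg p0 msize0.
have lead_deg : mdeg (mlead p) = d by apply/succn_inj; rewrite mlead_deg.
have lead_supp : (g d)@_(mlead p) != 0 by rewrite gd -mcoeff_msupp mlead_supp.
have [c [cd c_step c_supp]] := whitney_chain g_step g_size (leqnn d) lead_deg lead_supp.
apply: (branches_size c_step); first by rewrite cd mlead_supp.
move=> l i ld; have [b gb] := whitney_shift_supp g_step i ld (c_supp l i ld).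
by exists b; rewrite mulmS addmA -gd mcoeff_msupp.
Qed.
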